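(* Let $h>0$ and $0\le \alpha<1/4$. In the planar setting described in the context, let $g\in G$ be any target point. Then there exist two camera locations $s_p,s_q\in S$ such that $$\varepsilon(g,\{s_p,s_q\})\;\le\;\sqrt{\frac{1+2\alpha}{1-4\alpha}}\;\varepsilon(g,S).$$
   Context: Work in $\mathbb{R}^2$ with coordinates $(x,z)$. The ground line is $G=\{z=0\}$ and the viewing line is $S=\{z=h\}$, $h>0$. Fix an error bound $\alpha>0$ (radians). For a point $s$ and a unit vector $u$, the wedge $W(s,u)=\{s+rv:\ r\ge 0,\ |v|=1,\ \angle(v,u)\le\alpha\}$; it has apex $s$ and opening angle $2\alpha$. For a target $g$ and a camera location $s$, let $\mathcal W(g,s)$ be the set of all wedges $W(s,u)$, over all unit vectors $u$, that contain $g$. For a set $C\subseteq S$ of camera locations, the worst-case uncertainty is $$\varepsilon(g,C)=\sup\Big\{\operatorname{diam}\Big(\bigcap_{s\in C}W_s\Big):\ W_s\in\mathcal W(g,s)\ \text{for every } s\in C\Big\},$$ i.e. one wedge is chosen per camera so as to jointly maximize the diameter of the intersection. $\varepsilon(g,S)$ is the worst-case uncertainty obtained using all points of $S$ as cameras. *)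

From Stdlib Require Import Reals.
Open Scope R_scope.

Definition pt := (R * R)%type.

Definition padd (p q : pt) : pt := (fst p + fst q, snd p + snd q).
Definition pscale (r : R) (p : pt) : pt := (r * fst p, r * snd p).
Definition dot (p q : pt) : R := fst p * fst q + snd p * snd q.
Definition norm (p : pt) : R := sqrt (dot p p).
Definition dist (p q : pt) : R := sqrt ((fst p - fst q)^2 + (snd p - snd q)^2).
Definition unit_vec (v : pt) : Prop := norm v = 1.

Definition angle (v u : pt) : R := acos (dot v u).

Definition wedge (alpha : R) (s u : pt) (p : pt) : Prop :=
  exists r v, 0 <= r /\ unit_vec v /\ angle v u <= alpha /\ p = padd s (pscale r v).

Definition on_ground (g : pt) : Prop := snd g = 0.
Definition on_view (h : R) (s : pt) : Prop := snd s = h.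

Definition diam_le (A : pt -> Prop) (d : R) : Prop :=
  forall x y, A x -> A y -> dist x y <= d.

Definition admissible_choice (alpha : R) (g : pt) (C : pt -> Prop) (U : pt -> pt) : Prop :=
  forall s, C s -> unit_vec (U s) /\ wedge alpha s (U s) g.

Definition wedge_inter (alpha : R) (C : pt -> Prop) (U : pt -> pt) (p : pt) : Prop :=
  forall s, C s -> wedge alpha s (U s) p.

(* eps(g,C) <= d, where eps(g,C) is the supremum (in [0,+oo]) over admissible
   wedge choices of the diameter of the intersection. *)
Definition eps_le (alpha : R) (g : pt) (C : pt -> Prop) (d : R) : Prop :=
  forall U, admissible_choice alpha g C U -> diam_le (wedge_inter alpha C U) d.

(* eps(g,C1) <= c * eps(g,C2), as an inequality in [0,+oo] (c > 0):
   every real upper bound d of eps(g,C2) yields the bound c*d for eps(g,C1). *)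
Definition eps_rel_le (alpha : R) (g : pt) (C1 C2 : pt -> Prop) (c : R) : Prop :=
  forall d, eps_le alpha g C2 d -> eps_le alpha g C1 (c * d).

(* Write a for alpha.  Place the two cameras at (g_x - h, h) and (g_x + h, h): they see g
   along the two diagonals through g, at right angles.  A wedge of opening 2a containing g
   has its axis within a of the direction towards g, so in the frame of that direction two
   of its points with axial coordinate at most M differ transversally by at most
   tan (2a) M.  Applied to both cameras, in the diagonal coordinates x + z and x - z, this
   confines the intersection of the two wedges to a square of side
   E = 2 h sin 2a / (cos 2a - sin 2a), hence to diameter E.  Conversely, from every point
   of S the point at depth m = 2 h sin 2a / (1 - sin 2a) below g is seen within angle 2a
   of g, so the wedges bisecting the two directions all contain both points and
   eps(g, S) >= m.  Finally E / m = (1 - sin 2a) / (cos 2a - sin 2a), which is at most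
   sqrt ((1 + 2a) / (1 - 4a)) for a < 1/4. *)

From Pilot Require Import Defs.
From Stdlib Require Import Reals Lra Psatz.
Open Scope R_scope.

Definition psub (p q : pt) : pt := (fst p - fst q, snd p - snd q).
Definition perp (v : pt) : pt := (- snd v, fst v).
Definition unit_dir (v : pt) : pt := pscale (/ norm v) v.
Definition bisector (a b : pt) : pt := unit_dir (padd (unit_dir a) (unit_dir b)).

Lemma div_nonneg a b : 0 <= a -> 0 < b -> 0 <= a / b.
Proof. intros Ha Hb. apply Rmult_le_pos; [assumption | apply Rlt_le, Rinv_0_lt_compat, Hb]. Qed.

Lemma dot_self_ge0 (v : pt) : 0 <= dot v v.
Proof. unfold dot; nra. Qed.

Lemma dot_scale_l r (v w : pt) : dot (pscale r v) w = r * dot v w.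
Proof. unfold dot, pscale; simpl; ring. Qed.

Lemma dot_scale_r r (v w : pt) : dot v (pscale r w) = r * dot v w.
Proof. unfold dot, pscale; simpl; ring. Qed.

Lemma perp_scale r (v : pt) : perp (pscale r v) = pscale r (perp v).
Proof. unfold perp, pscale; simpl; f_equal; ring. Qed.

Lemma dot_comm (v w : pt) : dot v w = dot w v.
Proof. unfold dot; ring. Qed.

Lemma padd_comm (p q : pt) : padd p q = padd q p.
Proof. unfold padd; f_equal; ring. Qed.

Lemma padd_psub (s p : pt) : padd s (psub p s) = p.
Proof. destruct p; unfold padd, psub; simpl; f_equal; ring. Qed.

Lemma psub_padd (s v : pt) : psub (padd s v) s = v.
Proof. destruct v; unfold padd, psub; simpl; f_equal; ring. Qed.

Lemma dot_frame (x u v : pt) :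
  dot x u * dot v v = dot x v * dot u v + dot x (perp v) * dot u (perp v).
Proof. unfold dot, perp; simpl; ring. Qed.

Lemma dot_frame_perp (x u v : pt) :
  dot x (perp u) * dot v v = dot x (perp v) * dot u v - dot x v * dot u (perp v).
Proof. unfold dot, perp; simpl; ring. Qed.

Lemma unit_vecE (v : pt) : unit_vec v <-> dot v v = 1.
Proof.
  unfold unit_vec, norm; split; intro H.
  - rewrite <- (sqrt_sqrt (dot v v)) by apply dot_self_ge0. rewrite H; ring.
  - rewrite H; apply sqrt_1.
Qed.

Lemma dot_unit_bound (u v : pt) : unit_vec u -> unit_vec v -> -1 <= dot v u <= 1.
Proof.
  rewrite !unit_vecE; intros Hu Hv.
  pose proof (dot_frame v v u) as E. rewrite Hu, Hv in E.
  pose proof (Rle_0_sqr (dot v (perp u))). unfold Rsqr in *. split; nra.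
Qed.

Lemma acos_le_iff t a : -1 <= t <= 1 -> 0 <= a <= PI -> acos t <= a <-> cos a <= t.
Proof.
  intros Ht Ha. pose proof (acos_bound t). pose proof (cos_acos t Ht).
  split; intro Hle.
  - destruct Hle as [Hlt | <-]; [|lra].
    pose proof (cos_decreasing_1 (acos t) a ltac:(lra) ltac:(lra) ltac:(lra) ltac:(lra) Hlt). lra.
  - destruct (Rle_or_lt (acos t) a) as [|Hlt]; [assumption|].
    pose proof (cos_decreasing_1 a (acos t) ltac:(lra) ltac:(lra) ltac:(lra) ltac:(lra) Hlt). lra.
Qed.

Lemma wedgeP alpha s u p : 0 <= alpha <= PI -> unit_vec u ->
  wedge alpha s u p <->
  exists r v, 0 <= r /\ unit_vec v /\ cos alpha <= dot v u /\ p = padd s (pscale r v).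
Proof.
  intros Ha Hu; unfold wedge, angle.
  split; intros (r & v & Hr & Hv & Hang & Hp); exists r, v; repeat split; try assumption;
    apply (acos_le_iff _ _ (dot_unit_bound u v Hu Hv) Ha); assumption.
Qed.

Lemma wedge_perp_le alpha s u p : 0 <= alpha <= PI / 2 -> unit_vec u -> wedge alpha s u p ->
  cos alpha * Rabs (dot (psub p s) (perp u)) <= sin alpha * dot (psub p s) u.
Proof.
  intros Ha Hu Hp. pose proof PI2_1.
  apply wedgeP in Hp as (r & v & Hr & Hv & Hvu & ->); [|lra|assumption].
  rewrite psub_padd, !dot_scale_l, Rabs_mult, (Rabs_pos_eq r Hr).
  assert (HK : 0 <= cos alpha) by (apply cos_ge_0; lra).
  assert (Hs : 0 <= sin alpha) by (apply sin_ge_0; lra).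
  assert (Hcs : sin alpha * sin alpha + cos alpha * cos alpha = 1)
    by (pose proof (sin2_cos2 alpha); unfold Rsqr in *; lra).
  apply unit_vecE in Hu, Hv. pose proof (dot_frame v v u) as Hpyth. rewrite Hu, Hv in Hpyth.
  set (t := dot v u) in *; set (w := dot v (perp u)) in *.
  assert (Hw2 : Rabs w * Rabs w <= sin alpha * sin alpha).
  { rewrite <- Rabs_mult, Rabs_pos_eq by nra. nra. }
  assert (Hw : Rabs w <= sin alpha) by (pose proof (Rabs_pos w); nra).
  assert (cos alpha * Rabs w <= sin alpha * t) by nra.
  nra.
Qed.

Lemma cone_spread K S c d A1 B1 A2 B2 M :
  0 <= S <= K -> K * K + S * S = 1 -> c * c + d * d = 1 -> K <= c ->
  K * Rabs (B1 * c - A1 * d) <= S * (A1 * c + B1 * d) ->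
  K * Rabs (B2 * c - A2 * d) <= S * (A2 * c + B2 * d) ->
  A1 <= M -> A2 <= M -> 0 <= M ->
  (B1 - B2) * (K * K - S * S) <= 2 * K * S * M.
Proof.
  intros HSK H1 Hcd HKc HA1 HA2 HM1 HM2 HM.
  pose proof (Rle_abs (B1 * c - A1 * d)) as I1.
  pose proof (Rle_abs (- (B2 * c - A2 * d))) as I2. rewrite Rabs_Ropp in I2.
  assert (Hd : - S <= d <= S) by (split; nra).
  set (D1 := K * c - S * d); set (N1 := S * c + K * d).
  set (D2 := K * c + S * d); set (N2 := K * d - S * c).
  assert (HD1 : K * K - S * S <= D1) by (unfold D1; nra).
  assert (HD2 : K * K - S * S <= D2) by (unfold D2; nra).
  assert (HN1 : 0 <= N1) by (unfold N1; nra).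
  assert (HN2 : N2 <= 0) by (unfold N2; nra).
  (* the two points lie below, resp. above, the two boundary rays of the wedge *)
  assert (E1 : B1 * D1 <= M * N1) by (unfold D1, N1 in *; nra).
  assert (E2 : M * N2 <= B2 * D2) by (unfold D2, N2 in *; nra).
  assert (HDD : K * K - S * S <= D1 * D2).
  { replace (D1 * D2) with (c * c - S * S) by
      (unfold D1, D2; transitivity (c * c * (K * K + S * S) - S * S * (c * c + d * d));
       [rewrite H1, Hcd | ]; ring).
    nra. }
  assert (Hid : N1 * D2 - N2 * D1 = 2 * K * S)
    by (unfold N1, D1, N2, D2; transitivity (2 * K * S * (c * c + d * d));
        [ring | rewrite Hcd; ring]).
  assert (E3 : (B1 - B2) * (D1 * D2) <= 2 * K * S * M).
  { assert (B1 * D1 * D2 <= M * N1 * D2) by (apply Rmult_le_compat_r; nra).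
    assert (M * N2 * D1 <= B2 * D2 * D1) by (apply Rmult_le_compat_r; nra).
    rewrite <- Hid. nra. }
  assert (HW : 0 <= K * K - S * S) by nra.
  destruct (Rle_or_lt 0 (B1 - B2)).
  - assert ((B1 - B2) * (K * K - S * S) <= (B1 - B2) * (D1 * D2))
      by (apply Rmult_le_compat_l; assumption).
    lra.
  - assert (0 <= 2 * K * S * M) by (repeat apply Rmult_le_pos; lra).
    nra.
Qed.

Lemma wedge_spread alpha s u g p q M :
  0 <= alpha <= PI / 2 -> 0 <= cos (2 * alpha) -> unit_vec u -> g <> s ->
  wedge alpha s u g -> wedge alpha s u p -> wedge alpha s u q ->
  dot (psub p s) (psub g s) <= M -> dot (psub q s) (psub g s) <= M -> 0 <= M ->
  (dot (psub p s) (perp (psub g s)) - dot (psub q s) (perp (psub g s))) * cos (2 * alpha)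
    <= sin (2 * alpha) * M.
Proof.
  intros Ha HW Hu Hgs Hg Hp Hq HMp HMq HM. pose proof PI2_1.
  pose proof (wedge_perp_le _ _ _ _ Ha Hu Hp) as Cp.
  pose proof (wedge_perp_le _ _ _ _ Ha Hu Hq) as Cq.
  apply wedgeP in Hg as (r & v & Hr & Hv & Hvu & Hgv); [|lra|assumption].
  assert (Hr0 : 0 < r).
  { destruct Hr as [|<-]; [assumption|]. exfalso; apply Hgs; rewrite Hgv.
    destruct s, v; unfold padd, pscale; simpl; f_equal; ring. }
  rewrite Hgv, psub_padd, perp_scale, !dot_scale_r in *.
  apply unit_vecE in Hu, Hv. rewrite dot_comm in Hvu.
  assert (Hframe : forall x, dot x u = dot x v * dot u v + dot x (perp v) * dot u (perp v))
    by (intro x; rewrite <- dot_frame, Hv; ring).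
  assert (Hframe_perp :
            forall x, dot x (perp u) = dot x (perp v) * dot u v - dot x v * dot u (perp v))
    by (intro x; rewrite <- dot_frame_perp, Hv; ring).
  assert (Hcd : dot u v * dot u v + dot u (perp v) * dot u (perp v) = 1)
    by (rewrite <- dot_frame, Hu, Hv; ring).
  rewrite !Hframe, !Hframe_perp in *.
  assert (HK : 0 <= cos alpha) by (apply cos_ge_0; lra).
  assert (HS : 0 <= sin alpha) by (apply sin_ge_0; lra).
  assert (H1 : cos alpha * cos alpha + sin alpha * sin alpha = 1)
    by (pose proof (sin2_cos2 alpha); unfold Rsqr in *; lra).
  rewrite cos_2a in *. rewrite sin_2a.
  assert (HSK : sin alpha <= cos alpha) by nra.
  assert (Spread := cone_spread _ _ _ _ _ _ _ _ (M / r) (conj HS HSK) H1 Hcd Hvu Cp Cq).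
  (* rescale the bound on the axial coordinate from the frame [g - s] to the unit frame [v] *)
  assert (Hscale : forall A, r * A <= M -> A <= M / r)
    by (intros A HA; apply Rmult_le_reg_l with r; [lra|]; field_simplify; lra).
  specialize (Spread (Hscale _ HMp) (Hscale _ HMq) (div_nonneg _ _ HM Hr0)).
  apply Rmult_le_compat_l with (r := r) in Spread; [|lra].
  replace (r * (2 * cos alpha * sin alpha * (M / r))) with (2 * sin alpha * cos alpha * M)
    in Spread by (field; lra).
  lra.
Qed.

Definition spread_bounded {T : Type} (I : T -> Prop) (l m : T -> R) (h W V : R) : Prop :=
  forall X Y M, I X -> I Y -> m X + 2 * h <= M -> m Y + 2 * h <= M -> 0 <= M ->
    (l X - l Y) * W <= V * M.

Lemma spread_bounded_opp {T : Type} (I : T -> Prop) (l m : T -> R) h W V :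
  spread_bounded I l m h W V -> spread_bounded I (fun X => - l X) m h W V.
Proof.
  intros Hs X Y M IX IY HX HY HM.
  replace (- l X - - l Y) with (l Y - l X) by ring. apply Hs; assumption.
Qed.

Lemma camera_spread_bounded alpha s u g h (I : pt -> Prop) (l m : pt -> R) :
  0 < h -> 0 <= alpha <= PI / 2 -> 0 <= cos (2 * alpha) -> unit_vec u -> g <> s ->
  wedge alpha s u g -> (forall Z, I Z -> wedge alpha s u Z) ->
  (forall Z, dot (psub Z s) (psub g s) = h * (m Z + 2 * h)) ->
  (forall Z, dot (psub Z s) (perp (psub g s)) = h * l Z) ->
  spread_bounded I l m h (cos (2 * alpha)) (sin (2 * alpha)).
Proof.
  intros Hh Ha HW Hu Hgs Hg HI Axial Transverse X Y M IX IY HMX HMY HM.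
  assert (Spread := wedge_spread alpha s u g X Y (h * M) Ha HW Hu Hgs Hg (HI X IX) (HI Y IY)).
  rewrite !Axial, !Transverse in Spread.
  specialize (Spread ltac:(nra) ltac:(nra) ltac:(nra)).
  apply Rmult_le_reg_l with h; [lra | nra].
Qed.

Section SpreadBox.

Variables (h W V : R).
Hypotheses (Hh : 0 < h) (HV : 0 <= V) (HVW : V < W).

Let E := 2 * h * V / (W - V).

Lemma spread_radius_spec : E * (W - V) = 2 * h * V /\ 0 <= E.
Proof.
  unfold E; split; [field; lra | apply div_nonneg; nra].
Qed.

Lemma spread_bounded_abs {T : Type} (I : T -> Prop) (l m : T -> R) (o : T) :
  I o -> l o = 0 -> m o = 0 -> spread_bounded I l m h W V ->
  (forall X, I X -> Rabs (l X) * W <= V * (2 * h + Rabs (m X))) /\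
  (forall X Y, I X -> I Y -> Rabs (m X) <= E -> Rabs (m Y) <= E -> Rabs (l X - l Y) <= E).
Proof.
  intros Io lo mo Hs. destruct spread_radius_spec as [HE HE0]. split.
  - intros X IX. pose proof (Rle_abs (m X)). pose proof (Rabs_pos (m X)).
    assert (Up := Hs X o (2 * h + Rabs (m X)) IX Io ltac:(lra) ltac:(lra) ltac:(lra)).
    assert (Down := Hs o X (2 * h + Rabs (m X)) Io IX ltac:(lra) ltac:(lra) ltac:(lra)).
    rewrite lo in Up, Down.
    destruct (Rle_or_lt 0 (l X)); [rewrite Rabs_pos_eq | rewrite Rabs_left]; lra.
  - intros X Y IX IY HX HY.
    pose proof (Rle_abs (m X)). pose proof (Rle_abs (m Y)).
    assert (Up := Hs X Y (2 * h + E) IX IY ltac:(lra) ltac:(lra) ltac:(lra)).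
    assert (Down := Hs Y X (2 * h + E) IY IX ltac:(lra) ltac:(lra) ltac:(lra)).
    assert (HEW : V * (2 * h + E) = E * W) by nra.
    apply Rabs_le; split; apply Rmult_le_reg_r with W; lra.
Qed.

Lemma spread_box {T : Type} (I : T -> Prop) (l m : T -> R) (o : T) :
  I o -> l o = 0 -> m o = 0 ->
  spread_bounded I l m h W V -> spread_bounded I (fun X => - m X) (fun X => - l X) h W V ->
  forall X Y, I X -> I Y -> Rabs (l X - l Y) <= E /\ Rabs (m X - m Y) <= E.
Proof.
  intros Io lo mo Hl Hm.
  destruct (spread_bounded_abs I l m o Io lo mo Hl) as [Al Dl].
  destruct (spread_bounded_abs I (fun X => - m X) (fun X => - l X) o Io
              ltac:(cbv beta; rewrite mo; ring) ltac:(cbv beta; rewrite lo; ring) Hm) as [Am Dm].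
  destruct spread_radius_spec as [HE HE0].
  assert (Box : forall X, I X -> Rabs (l X) <= E /\ Rabs (m X) <= E).
  { intros X IX. specialize (Al X IX). specialize (Am X IX). rewrite !Rabs_Ropp in Am.
    pose proof (Rabs_pos (l X)). pose proof (Rabs_pos (m X)).
    destruct (Rle_or_lt (Rabs (m X)) (Rabs (l X))).
    - assert (Rabs (l X) <= E) by (apply Rmult_le_reg_r with (W - V); nra). lra.
    - assert (Rabs (m X) <= E) by (apply Rmult_le_reg_r with (W - V); nra). lra. }
  intros X Y IX IY.
  destruct (Box X IX), (Box Y IY). split.
  - apply Dl; assumption.
  - replace (m X - m Y) with (- (- m X - - m Y)) by ring. rewrite Rabs_Ropp.
    apply Dm; rewrite ?Rabs_Ropp; assumption.
Qed.

End SpreadBox.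

Lemma dist_le_diagonals (p q : pt) E : 0 <= E ->
  Rabs ((fst p - fst q) + (snd p - snd q)) <= E ->
  Rabs ((fst p - fst q) - (snd p - snd q)) <= E -> Defs.dist p q <= E.
Proof.
  intros HE Hl Hm. unfold Defs.dist. rewrite <- (sqrt_square E HE).
  apply sqrt_le_1; [apply Rplus_le_le_0_compat; apply pow2_ge_0 | nra |].
  apply (pow_maj_Rabs _ _ 2) in Hl, Hm. nra.
Qed.

Lemma pair_eps_le h alpha g :
  0 < h -> 0 <= alpha <= PI / 2 -> sin (2 * alpha) < cos (2 * alpha) -> on_ground g ->
  eps_le alpha g (fun s => s = (fst g - h, h) \/ s = (fst g + h, h))
    (2 * h * sin (2 * alpha) / (cos (2 * alpha) - sin (2 * alpha))).
Proof.
  unfold on_ground. intros Hh Ha HVW Hg U HU X Y HX HY. pose proof PI2_1.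
  assert (HV : 0 <= sin (2 * alpha)) by (apply sin_ge_0; lra).
  set (sp := (fst g - h, h)); set (sq := (fst g + h, h)).
  destruct (HU sp (or_introl eq_refl)) as [Hup Hgp].
  destruct (HU sq (or_intror eq_refl)) as [Huq Hgq].
  assert (Hgs : forall s : pt, snd s = h -> g <> s)
    by (intros s Hs E; rewrite <- E in Hs; lra).
  (* [l] is the transverse and [m + 2 h] the axial coordinate seen from [sp] (up to the
     factor [h]); seen from [sq] the roles are exchanged, up to signs *)
  set (l := fun X : pt => (fst X - fst g) + snd X).
  set (m := fun X : pt => (fst X - fst g) - snd X).
  set (I := wedge_inter alpha (fun s => s = sp \/ s = sq) U).
  assert (Hl : spread_bounded I l m h (cos (2 * alpha)) (sin (2 * alpha))).
  { apply (camera_spread_bounded alpha sp (U sp) g); try assumption; try lra.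
    - apply Hgs; reflexivity.
    - intros Z IZ; apply IZ; left; reflexivity.
    - intro Z; unfold dot, psub, m, sp; simpl; rewrite Hg; ring.
    - intro Z; unfold dot, psub, perp, l, sp; simpl; rewrite Hg; ring. }
  assert (Hm : spread_bounded I (fun X => - m X) (fun X => - l X) h
                 (cos (2 * alpha)) (sin (2 * alpha))).
  { apply spread_bounded_opp, (camera_spread_bounded alpha sq (U sq) g); try assumption; try lra.
    - apply Hgs; reflexivity.
    - intros Z IZ; apply IZ; right; reflexivity.
    - intro Z; unfold dot, psub, l, sq; simpl; rewrite Hg; ring.
    - intro Z; unfold dot, psub, perp, m, sq; simpl; rewrite Hg; ring. }
  assert (Ig : I g) by (intros s [-> | ->]; assumption).
  destruct (spread_box h _ _ Hh HV HVW I l m g Ig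
              ltac:(unfold l; rewrite Hg; ring) ltac:(unfold m; rewrite Hg; ring) Hl Hm X Y HX HY)
    as [Bl Bm].
  destruct (spread_radius_spec h _ _ Hh HV HVW) as [_ HE0].
  apply dist_le_diagonals; [assumption | |].
  - replace ((fst X - fst Y) + (snd X - snd Y)) with (l X - l Y) by (unfold l; ring). exact Bl.
  - replace ((fst X - fst Y) - (snd X - snd Y)) with (m X - m Y) by (unfold m; ring). exact Bm.
Qed.

Lemma norm_sq (v : pt) : norm v * norm v = dot v v.
Proof. apply sqrt_sqrt, dot_self_ge0. Qed.

Lemma unit_dir_spec (v : pt) : 0 < norm v ->
  unit_vec (unit_dir v) /\ v = pscale (norm v) (unit_dir v).
Proof.
  intros Hn. pose proof (norm_sq v) as Hsq. unfold unit_dir. split.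
  - apply unit_vecE. rewrite dot_scale_l, dot_scale_r, <- Hsq. field. lra.
  - destruct v; unfold pscale; simpl; f_equal; field; lra.
Qed.

Lemma bisector_dot (a b : pt) K : unit_vec a -> unit_vec b -> 0 < K ->
  2 * K * K - 1 <= dot a b ->
  0 < norm (padd a b) /\ K <= dot a (unit_dir (padd a b)).
Proof.
  rewrite !unit_vecE. intros Ha Hb HK Hab.
  assert (Hw : dot (padd a b) (padd a b) = 2 + 2 * dot a b).
  { transitivity (dot a a + dot b b + 2 * dot a b); [unfold dot, padd; simpl; ring|].
    rewrite Ha, Hb; ring. }
  assert (Haw : dot a (padd a b) = 1 + dot a b).
  { transitivity (dot a a + dot a b); [unfold dot, padd; simpl; ring|]. rewrite Ha; ring. }
  pose proof (norm_sq (padd a b)) as Hn. rewrite Hw in Hn.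
  assert (Hn0 : 0 < norm (padd a b)) by (unfold norm; apply sqrt_lt_R0; nra).
  split; [assumption|].
  unfold unit_dir. rewrite dot_scale_r, Haw.
  (* a . (a + b) / |a + b| = sqrt ((1 + a . b) / 2), the cosine of half the angle *)
  apply Rmult_le_reg_l with (norm (padd a b)); [assumption|].
  field_simplify; [|lra]. nra.
Qed.

Lemma wedge_bisector alpha s p q :
  0 <= alpha < PI / 2 -> 0 < norm (psub p s) -> 0 < norm (psub q s) ->
  cos (2 * alpha) * (norm (psub p s) * norm (psub q s)) <= dot (psub p s) (psub q s) ->
  let u := bisector (psub p s) (psub q s) in
  unit_vec u /\ wedge alpha s u p /\ wedge alpha s u q.
Proof.
  intros Ha Hp Hq Hpq u. pose proof PI2_1.
  destruct (unit_dir_spec _ Hp) as [Hap Hp'].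
  destruct (unit_dir_spec _ Hq) as [Haq Hq'].
  set (a := unit_dir (psub p s)) in *; set (b := unit_dir (psub q s)) in *.
  assert (HK : 0 < cos alpha) by (apply cos_gt_0; lra).
  assert (Hab : 2 * cos alpha * cos alpha - 1 <= dot a b).
  { rewrite <- cos_2a_cos. apply Rmult_le_reg_l with (norm (psub p s) * norm (psub q s)); [nra|].
    replace (norm (psub p s) * norm (psub q s) * dot a b)
      with (dot (pscale (norm (psub p s)) a) (pscale (norm (psub q s)) b))
      by (rewrite dot_scale_l, dot_scale_r; ring).
    rewrite <- Hp', <- Hq'. lra. }
  destruct (bisector_dot a b _ Hap Haq HK Hab) as [Hw Hau].
  destruct (bisector_dot b a _ Haq Hap HK ltac:(rewrite dot_comm; lra)) as [_ Hbu].
  rewrite padd_comm in Hbu.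
  assert (Hu : unit_vec u) by apply (unit_dir_spec _ Hw).
  split; [assumption|]; split; apply wedgeP; try lra; try assumption.
  - exists (norm (psub p s)), a. rewrite <- Hp', padd_psub.
    repeat split; [lra | assumption | exact Hau].
  - exists (norm (psub q s)), b. rewrite <- Hq', padd_psub.
    repeat split; [lra | assumption | exact Hbu].
Qed.

(* [m] is the largest depth for which the vertical segment of length [m] below a ground
   point is seen under an angle at most [2 alpha] from every point of [S]; the extreme
   viewpoint is at horizontal offset [x] with [x^2 = h (h + m)]. *)
Lemma segment_subtends h m x V W :
  0 < h -> 0 <= m -> 0 <= V -> W * W + V * V = 1 -> m * (1 - V) = 2 * h * V ->
  W * (norm (x, - h) * norm (x, - (m + h))) <= dot (x, - h) (x, - (m + h)).
Proof.
  intros Hh Hm HV HWV Hmv.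
  set (a := (x, - h) : pt); set (b := (x, - (m + h)) : pt).
  set (N := dot a b); set (P := norm a * norm b).
  assert (HN : N = x * x + h * (m + h)) by (unfold N, a, b, dot; simpl; ring).
  assert (HP0 : 0 <= P) by (unfold P, norm; apply Rmult_le_pos; apply sqrt_pos).
  assert (HP : P * P = N * N + (x * m) * (x * m)).
  { replace (P * P) with ((norm a * norm a) * (norm b * norm b)) by (unfold P; ring).
    rewrite !norm_sq, dot_frame. unfold N, a, b, dot, perp; simpl; ring. }
  assert (Hcross : (x * (2 * h + m)) * (x * (2 * h + m)) <= P * P).
  { rewrite HP, HN. pose proof (Rle_0_sqr (x * x - h * (h + m))). unfold Rsqr in *. nra. }
  assert (Hsin : (x * m) * (x * m) <= V * V * (P * P)).
  { assert (Hm' : m = V * (2 * h + m)) by lra.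
    replace (x * m) with (x * (V * (2 * h + m))) by (rewrite <- Hm'; reflexivity).
    replace (x * (V * (2 * h + m)) * (x * (V * (2 * h + m))))
      with (V * V * ((x * (2 * h + m)) * (x * (2 * h + m)))) by ring.
    apply Rmult_le_compat_l; nra. }
  assert (HWP : (W * P) * (W * P) <= N * N).
  { replace ((W * P) * (W * P)) with ((1 - V * V) * (P * P)) by nra. nra. }
  assert (0 < N) by (rewrite HN; nra).
  fold a b. fold P. nra.
Qed.

Lemma norm_pos_of_snd (v : pt) : snd v <> 0 -> 0 < norm v.
Proof.
  intros Hv. unfold norm, dot. apply sqrt_lt_R0.
  pose proof (Rle_0_sqr (fst v)). assert (0 < snd v * snd v) by (apply Rsqr_pos_lt; assumption).
  unfold Rsqr in *. lra.
Qed.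

Lemma eps_view_ge h alpha g d :
  0 < h -> 0 <= alpha < PI / 2 -> sin (2 * alpha) < 1 -> on_ground g ->
  eps_le alpha g (on_view h) d -> 2 * h * sin (2 * alpha) / (1 - sin (2 * alpha)) <= d.
Proof.
  unfold on_ground, on_view. intros Hh Ha HV1 Hg Hd. pose proof PI2_1.
  assert (HV : 0 <= sin (2 * alpha)) by (apply sin_ge_0; lra).
  assert (Hcs : cos (2 * alpha) * cos (2 * alpha) + sin (2 * alpha) * sin (2 * alpha) = 1)
    by (pose proof (sin2_cos2 (2 * alpha)); unfold Rsqr in *; lra).
  set (m := 2 * h * sin (2 * alpha) / (1 - sin (2 * alpha))).
  assert (Hm : m * (1 - sin (2 * alpha)) = 2 * h * sin (2 * alpha)) by (unfold m; field; lra).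
  assert (Hm0 : 0 <= m) by (apply div_nonneg; nra).
  set (g' := (fst g, - m)).
  set (U := fun s => bisector (psub g s) (psub g' s)).
  assert (Views : forall s, snd s = h ->
            unit_vec (U s) /\ wedge alpha s (U s) g /\ wedge alpha s (U s) g').
  { intros s Hs.
    assert (Ea : psub g s = (fst g - fst s, - h))
      by (unfold psub; rewrite Hg, Hs; f_equal; ring).
    assert (Eb : psub g' s = (fst g - fst s, - (m + h)))
      by (unfold psub, g'; rewrite Hs; simpl; f_equal; ring).
    apply wedge_bisector; [lra | rewrite Ea | rewrite Eb | rewrite Ea, Eb];
      [apply norm_pos_of_snd; simpl; lra ..
      | apply segment_subtends with (V := sin (2 * alpha)); assumption]. }
  assert (Hgg' : Defs.dist g g' <= d).
  { apply (Hd U).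
    - intros s Hs. destruct (Views s Hs) as (Hu & Hg0 & _). split; assumption.
    - intros s Hs. apply (Views s Hs).
    - intros s Hs. apply (Views s Hs). }
  replace (Defs.dist g g') with m in Hgg'; [assumption|].
  unfold Defs.dist, g'; cbn [fst snd]. rewrite Hg.
  replace ((fst g - fst g) ^ 2 + (0 - - m) ^ 2) with (m * m) by ring.
  symmetry; apply sqrt_square; assumption.
Qed.

Lemma eps_le_mono alpha g C d1 d2 : d1 <= d2 -> eps_le alpha g C d1 -> eps_le alpha g C d2.
Proof. intros H12 Hd U HU x y Hx Hy. specialize (Hd U HU x y Hx Hy). lra. Qed.

Lemma sin_le_id x : 0 <= x -> sin x <= x.
Proof. intros [Hx | <-]; [left; apply sin_lt_x; assumption | rewrite sin_0; lra]. Qed.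

Lemma one_sub_cos_2a_le alpha : 0 <= alpha <= PI -> 1 - cos (2 * alpha) <= 2 * alpha * alpha.
Proof.
  intros Ha. rewrite cos_2a_sin.
  pose proof (sin_ge_0 alpha ltac:(lra) ltac:(lra)). pose proof (sin_le_id alpha ltac:(lra)). nra.
Qed.

Lemma cos_sub_sin_2a_ge alpha : 0 <= alpha <= PI ->
  1 - 2 * alpha - 2 * alpha * alpha <= cos (2 * alpha) - sin (2 * alpha).
Proof.
  intros Ha. rewrite cos_2a_sin, sin_2a.
  pose proof (sin_ge_0 alpha ltac:(lra) ltac:(lra)). pose proof (sin_le_id alpha ltac:(lra)).
  pose proof (COS_bound alpha). nra.
Qed.

Lemma pair_bound_le_view_bound h alpha : 0 < h -> 0 <= alpha < 1 / 4 ->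
  2 * h * sin (2 * alpha) / (cos (2 * alpha) - sin (2 * alpha))
    <= sqrt ((1 + 2 * alpha) / (1 - 4 * alpha))
       * (2 * h * sin (2 * alpha) / (1 - sin (2 * alpha))).
Proof.
  intros Hh Ha. pose proof PI2_1.
  pose proof (one_sub_cos_2a_le alpha ltac:(lra)) as HW.
  pose proof (cos_sub_sin_2a_ge alpha ltac:(lra)) as HWV.
  assert (HV : 0 <= sin (2 * alpha)) by (apply sin_ge_0; lra).
  set (V := sin (2 * alpha)) in *; set (W := cos (2 * alpha)) in *.
  set (c := sqrt ((1 + 2 * alpha) / (1 - 4 * alpha))).
  set (Q := 1 - 2 * alpha - 2 * alpha * alpha) in *.
  assert (HQ : 0 < Q) by (unfold Q; nra).
  assert (HW1 : W <= 1) by apply COS_bound.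
  (* [(1 - 2 alpha) / Q] dominates [(1 - V) / (W - V)] and is itself at most [c] *)
  assert (Hratio : (1 - V) * Q <= (1 - 2 * alpha) * (W - V)).
  { replace (1 - 2 * alpha) with (Q + 2 * alpha * alpha) by (unfold Q; ring). nra. }
  assert (Hc : (1 - 2 * alpha) / Q <= c).
  { unfold c. rewrite <- (sqrt_square ((1 - 2 * alpha) / Q)) by (apply div_nonneg; lra).
    apply sqrt_le_1; [nra | apply div_nonneg; lra |].
    apply Rmult_le_reg_r with (Q * Q * (1 - 4 * alpha)); [apply Rmult_lt_0_compat; nra |].
    field_simplify; [| lra | lra]. unfold Q. nra. }
  assert (Hm0 : 0 <= 2 * h * V / (1 - V)) by (apply div_nonneg; nra).
  apply Rle_trans with ((1 - 2 * alpha) / Q * (2 * h * V / (1 - V))).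
  - apply Rmult_le_reg_r with ((W - V) * Q * (1 - V)); [apply Rmult_lt_0_compat; nra |].
    field_simplify; [| lra | lra].
    pose proof (Rmult_le_compat_l (2 * h * V) _ _ ltac:(nra) Hratio). nra.
  - apply Rmult_le_compat_r; assumption.
Qed.

Theorem theorem1 (h alpha : R) (g : pt) :
  0 < h -> 0 <= alpha -> alpha < 1/4 -> on_ground g ->
  exists sp sq : pt,
    on_view h sp /\ on_view h sq /\ sp <> sq /\
    eps_rel_le alpha g (fun s => s = sp \/ s = sq) (on_view h)
      (sqrt ((1 + 2 * alpha) / (1 - 4 * alpha))).
Proof.
  intros Hh Ha0 Ha1 Hg. pose proof PI2_1.
  assert (HVW : sin (2 * alpha) < cos (2 * alpha))
    by (pose proof (cos_sub_sin_2a_ge alpha ltac:(lra)); nra).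
  assert (HV1 : sin (2 * alpha) < 1) by (pose proof (COS_bound (2 * alpha)); lra).
  exists (fst g - h, h), (fst g + h, h).
  split; [reflexivity|]; split; [reflexivity|]; split.
  - intros E. apply (f_equal fst) in E. simpl in E. lra.
  - intros d Hd.
    pose proof (eps_view_ge h alpha g d Hh ltac:(lra) HV1 Hg Hd) as Hview.
    apply eps_le_mono with (d1 := 2 * h * sin (2 * alpha) / (cos (2 * alpha) - sin (2 * alpha))).
    + eapply Rle_trans; [apply pair_bound_le_view_bound; [assumption | lra] |].
      apply Rmult_le_compat_l; [apply sqrt_pos | assumption].
    + apply pair_eps_le; [assumption | lra | assumption | assumption].
Qed.
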